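(* There exists a CPwL map $F:\mathbb{R}^2\to\mathbb{R}^2$ such that \[ F(E(t))=E(r(t))\qquad\text{for all } t\in[0,1]. \] Moreover, $F$ admits an exact finite ReLU network realization (of some fixed width and depth).
   Context: $r:[0,1]\to[0,1]$ is defined by $r(t)=2t-\lfloor 2t\rfloor$ for $t\in[0,1)$ and $r(1)=1$. Let $\Gamma$ be the boundary of the triangle with vertices $a_0=(0,0)$, $a_1=(1,1)$, $a_2=(1,0)$, parametrized by $E:[0,1]\to\Gamma$, \[ E(t)=\begin{cases}(3t,3t),&0\le t\le\tfrac13,\\(1,2-3t),&\tfrac13\le t\le\tfrac23,\\(3-3t,0),&\tfrac23\le t\le1.\end{cases} \] CPwL means continuous piecewise linear (continuous, and affine on the cells of a finite polygonal subdivision of every compact set). *)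

From HB Require Import structures.
From mathcomp Require Import all_boot all_order all_algebra.
From mathcomp Require Import all_classical all_reals all_analysis.
Set Implicit Arguments. Unset Strict Implicit. Unset Printing Implicit Defensive.
Import Order.TTheory GRing.Theory Num.Theory.
Import numFieldNormedType.Exports.
Local Open Scope ring_scope.

Section Defs.
Variable R : realType.

Definition px (x : 'cV[R]_2) : R := x (inord 0) ord0.
Definition py (x : 'cV[R]_2) : R := x (inord 1) ord0.
Definition pt (a b : R) : 'cV[R]_2 := \col_(i < 2) (if val i == 0%N then a else b).

Definition rmap (t : R) : R :=
  if t == 1 then 1 else 2 * t - (Num.floor (2 * t))%:~R.

(* parametrization E of the boundary of the triangle (0,0),(1,1),(1,0) *)
Definition Epar (t : R) : 'cV[R]_2 :=
  if t <= 3^-1 then pt (3 * t) (3 * t)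
  else if t <= 2 / 3 then pt 1 (2 - 3 * t)
  else pt (3 - 3 * t) 0.

(* closed half-plane {x | a1 x1 + a2 x2 <= c} encoded by (a1, a2, c);
   a convex polygonal cell is a finite intersection of closed half-planes *)
Definition in_cell (C : seq (R * R * R)) (x : 'cV[R]_2) : Prop :=
  forall h, h \in C -> h.1.1 * px x + h.1.2 * py x <= h.2.

Definition affine_on (F : 'cV[R]_2 -> 'cV[R]_2) (C : seq (R * R * R)) : Prop :=
  exists (A : 'M[R]_2) (b : 'cV[R]_2), forall x, in_cell C x -> F x = A *m x + b.

(* CPwL: continuous, and for every compact set (every compact set lies in
   some box [-M,M]^2) a finite family of polygonal cells covers it with F
   affine on each cell *)
Definition CPwL (F : 'cV[R]_2 -> 'cV[R]_2) : Prop :=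
  continuous F /\
  forall M : R, exists cells : seq (seq (R * R * R)),
    (forall x, `|px x| <= M -> `|py x| <= M -> exists2 C, C \in cells & in_cell C x) /\
    (forall C, C \in cells -> affine_on F C).

Definition relu (a : R) : R := Num.max a 0.

Inductive relu_net : nat -> nat -> Type :=
| OutLayer (m n : nat) (W : 'M[R]_(n, m)) (b : 'cV[R]_n) : relu_net m n
| HiddenLayer (m k n : nat) (W : 'M[R]_(k, m)) (b : 'cV[R]_k) (rest : relu_net k n) :
    relu_net m n.

Fixpoint net_eval (m n : nat) (N : relu_net m n) : 'cV[R]_m -> 'cV[R]_n :=
  match N in relu_net m n return 'cV[R]_m -> 'cV[R]_n with
  | OutLayer _ _ W b => fun x => W *m x + b
  | HiddenLayer _ _ _ W b rest => fun x => net_eval rest (map_mx relu (W *m x + b))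
  end.

End Defs.

(* The lines x = 1/2, y = 1/2 and x - y = 1/2 pass through the midpoints E(1/6),
   E(1/2), E(5/6) of the sides of the triangle; these and the vertices are the only
   points where t |-> E(r(t)) switches between affine pieces. A constant plus a
   combination of ReLUs of the three affine forms cutting out these lines is affine
   on each of their eight sign cells, and the coefficients can be chosen so that it
   sends E(t) to E(2t) on the first half of the boundary and to E(2t - 1) on the
   second. Such a map is a one-hidden-layer ReLU network, hence continuous. *)
From HB Require Import structures.
From mathcomp Require Import all_boot all_order all_algebra.
From mathcomp Require Import all_classical all_reals all_analysis.
From mathcomp Require Import lra ring.
Import Order.TTheory GRing.Theory Num.Theory.
Import numFieldNormedType.Exports.
Local Open Scope ring_scope.

Section ReluNetContinuous.
Variable R : realType.

Lemma continuous_mx_entries {T : topologicalType} {m n : nat} (f : T -> 'M[R]_(m, n)) :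
  (forall i j, continuous (fun x => f x i j)) -> continuous f.
Proof.
move=> fc x A [B fxB sBA].
apply: (@filterS _ _ _ [set y | forall i j, B i j (f y i j)]) => [y fyB|].
  exact: sBA.
apply: filter_forall => i; apply: filter_forall => j; exact: fc _ _ _ (fxB i j).
Qed.

Lemma continuous_sum {T : topologicalType} {I : Type} (s : seq I) (g : I -> T -> R) :
  (forall k, continuous (g k)) -> continuous (fun x => \sum_(k <- s) g k x).
Proof.
move=> gc; elim: s => [|k s IH].
  rewrite (_ : (fun _ => _) = fun=> 0); first exact: cst_continuous.
  by apply/funext => x; rewrite big_nil.
rewrite (_ : (fun _ => _) = fun x => g k x + \sum_(k <- s) g k x).
  by move=> x; exact: (continuousD (gc k x) (IH x)).
by apply/funext => x; rewrite big_cons.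
Qed.

Lemma continuous_map_mx {T : topologicalType} {m n : nat} {g : R -> R} {f : T -> 'M[R]_(m, n)} :
  continuous g -> continuous f -> continuous (fun x => map_mx g (f x)).
Proof.
move=> gc fc; apply: continuous_mx_entries => i j.
under eq_fun do rewrite mxE.
move=> x; apply: (@continuous_comp _ _ _ (fun y => f y i j) g); last exact: gc.
apply: (@continuous_comp _ _ _ f (fun M => M i j)); first exact: fc.
exact: coord_continuous.
Qed.

Lemma continuous_affine m n (W : 'M[R]_(n, m)) (b : 'cV[R]_n) :
  continuous (fun x : 'cV[R]_m => W *m x + b).
Proof.
apply: continuous_mx_entries => i j.
under eq_fun do rewrite !mxE.
move=> x; apply: continuousD; last exact: cst_continuous.
apply: continuous_sum => k {}x; apply: continuousM; first exact: cst_continuous.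
exact: coord_continuous.
Qed.

Lemma continuous_relu : continuous (@relu R).
Proof. by move=> x; apply: continuous_max => //; exact: cst_continuous. Qed.

Lemma net_eval_continuous m n (N : relu_net R m n) : continuous (net_eval N).
Proof.
elim: N => [{}m {}n W b | {}m k {}n W b N IH] /=; first exact: continuous_affine.
have layer_cont : continuous (fun y : 'cV[R]_m => map_mx (@relu R) (W *m y + b)).
  apply: (@continuous_map_mx _ _ _ (@relu R) (fun y => W *m y + b)).
    exact: continuous_relu.
  exact: continuous_affine.
by move=> x; exact: continuous_comp (layer_cont x) (IH _).
Qed.

End ReluNetContinuous.

Section FoldingMap.
Variable R : realType.
Implicit Types (a b t : R) (x : 'cV[R]_2).

Lemma pxE x : px x = x ord0 ord0.
Proof. by rewrite /px; congr (x _ _); apply/val_inj; rewrite /= inordK. Qed.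

Lemma pyE x : py x = x (lift ord0 ord0) ord0.
Proof. by rewrite /py; congr (x _ _); apply/val_inj; rewrite /= inordK. Qed.

Lemma px_pt a b : px (pt a b) = a.
Proof. by rewrite /px /pt mxE /= inordK. Qed.

Lemma py_pt a b : py (pt a b) = b.
Proof. by rewrite /py /pt mxE /= inordK. Qed.

Lemma ger0_relu a : 0 <= a -> relu a = a.
Proof. by move=> a_ge0; rewrite /relu max_l. Qed.

Lemma ler0_relu a : a <= 0 -> relu a = 0.
Proof. by move=> a_le0; rewrite /relu max_r. Qed.

Lemma pt_affine (a11 a12 c1 a21 a22 c2 : R) :
  exists (A : 'M[R]_2) (c : 'cV[R]_2), forall x,
    A *m x + c = pt (a11 * px x + a12 * py x + c1) (a21 * px x + a22 * py x + c2).
Proof.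
exists (\matrix_(i < 2, j < 2) nth 0 (nth [::] [:: [:: a11; a12]; [:: a21; a22]] i) j).
exists (pt c1 c2) => x; rewrite pxE pyE.
apply/matrixP => i j; rewrite (ord1 j) !mxE !big_ord_recl big_ord0 !mxE.
by case: i => [[|[|k]] Hk] //=; ring.
Qed.

Definition fold_map x : 'cV[R]_2 :=
  pt (1 - 2 * relu (px x - 2^-1) - 2 * relu (2^-1 - px x)
        + 2 * relu (py x - 2^-1) + 2 * relu (px x - py x - 2^-1))
     (1 - 2 * relu (px x - 2^-1) - 2 * relu (2^-1 - py x)
        + 4 * relu (px x - py x - 2^-1)).

Definition fold_net : relu_net R 2 2 :=
  HiddenLayer
    (\matrix_(i < 5, j < 2)
       nth 0 (nth [::] [:: [:: 1; 0]; [:: -1; 0]; [:: 0; 1]; [:: 0; -1]; [:: 1; -1]] i) j)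
    (\col_(i < 5) nth 0 [:: -2^-1; 2^-1; -2^-1; 2^-1; -2^-1] i)
    (OutLayer
       (\matrix_(i < 2, j < 5)
          nth 0 (nth [::] [:: [:: -2; -2; 2; 0; 2]; [:: -2; 0; 0; -2; 4]] i) j)
       (\col_(i < 2) 1)).

Lemma fold_netE x : net_eval fold_net x = fold_map x.
Proof.
rewrite /fold_map pxE pyE /=; apply/matrixP => i j.
rewrite (ord1 j) !mxE !big_ord_recl big_ord0 !mxE !big_ord_recl !big_ord0 !mxE.
case: i => [[|[|k]] Hk] //=;
  by rewrite !(mul1r, mul0r, mulN1r, add0r, addr0) ?(addrC (- _) (2^-1)); ring.
Qed.

Ltac solve_relus :=
  repeat match goal with |- context [relu ?a] =>
    first [ rewrite (@ger0_relu a); last lra | rewrite (@ler0_relu a); last lra ] end.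

Ltac solve_fold_piece :=
  rewrite /fold_map !px_pt !py_pt; solve_relus; congr pt; lra.

Lemma rmap_lt_half t : 0 <= t < 2^-1 -> rmap t = 2 * t.
Proof.
move=> t_range; rewrite /rmap ifF; last by apply/negbTE/eqP => t1; lra.
by rewrite (@floor_def _ _ 0) ?subr0 //= ?intr0 ?add0r ?mulr1z; lra.
Qed.

Lemma rmap_ge_half t : 2^-1 <= t <= 1 -> rmap t = 2 * t - 1.
Proof.
move=> t_range; rewrite /rmap; case: eqP => [->|t_neq1]; first lra.
have t_lt1 : t < 1 by rewrite lt_neqAle; apply/andP; split; [apply/eqP | lra].
by rewrite (@floor_def _ _ 1) // intrD mulr1z; lra.
Qed.

Lemma Epar_side1 t : t <= 3^-1 -> Epar t = pt (3 * t) (3 * t).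
Proof. by move=> t_le; rewrite /Epar t_le. Qed.

Lemma Epar_side2 t : 3^-1 < t <= 2 / 3 -> Epar t = pt 1 (2 - 3 * t).
Proof. by case/andP => t_gt t_le; rewrite /Epar leNgt t_gt t_le. Qed.

Lemma Epar_side3 t : 2 / 3 < t -> Epar t = pt (3 - 3 * t) 0.
Proof.
move=> t_gt; have t_gt13 : 3^-1 < t by apply: lt_trans t_gt; lra.
by rewrite /Epar leNgt t_gt13 leNgt t_gt.
Qed.

Lemma fold_map_Epar_lo t : 0 <= t <= 2^-1 -> fold_map (Epar t) = Epar (2 * t).
Proof.
case/andP => t_ge0 t_le.
have [t_le16|t_gt16] := leP t (6^-1).
  by rewrite !Epar_side1; [solve_fold_piece | lra | lra].
have [t_le13|t_gt13] := leP t (3^-1).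
  by rewrite Epar_side1 ?Epar_side2; [solve_fold_piece | lra | lra].
by rewrite Epar_side2 ?Epar_side3; [solve_fold_piece | lra | lra].
Qed.

Lemma fold_map_Epar_hi t : 2^-1 <= t <= 1 -> fold_map (Epar t) = Epar (2 * t - 1).
Proof.
case/andP => t_ge t_le1.
have [t_le23|t_gt23] := leP t (2 / 3).
  by rewrite Epar_side2 ?Epar_side1; [solve_fold_piece | lra | lra].
have [t_le56|t_gt56] := leP t (5 / 6).
  by rewrite Epar_side3 ?Epar_side2; [solve_fold_piece | lra | lra].
by rewrite !Epar_side3; [solve_fold_piece | lra | lra].
Qed.

Lemma fold_map_Epar t : 0 <= t <= 1 -> fold_map (Epar t) = Epar (rmap t).
Proof.
case/andP => t_ge0 t_le1; have [t_lt|t_ge] := ltP t 2^-1.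
  by rewrite rmap_lt_half ?fold_map_Epar_lo //; apply/andP; split => //; lra.
by rewrite rmap_ge_half ?fold_map_Epar_hi //; apply/andP.
Qed.

Definition orient (s : bool) (h : R * R * R) : R * R * R :=
  if s then (- h.1.1, - h.1.2, - h.2) else h.

Definition hinge_cell (s : bool * bool * bool) : seq (R * R * R) :=
  [:: orient s.1.1 (1, 0, 2^-1); orient s.1.2 (0, 1, 2^-1); orient s.2 (1, -1, 2^-1)].

Definition hinge_cells : seq (seq (R * R * R)) :=
  map hinge_cell (enum {: bool * bool * bool}).

Lemma hinge_cells_cover x : exists2 C, C \in hinge_cells & in_cell C x.
Proof.
exists (hinge_cell (0 <= px x - 2^-1, 0 <= py x - 2^-1, 0 <= px x - py x - 2^-1)).
  by apply: map_f; rewrite mem_enum.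
by move=> h; rewrite !inE /orient => /or3P[] /eqP -> /=; case: ifP => /= ?; lra.
Qed.

Lemma fold_map_affine_on_cells C : C \in hinge_cells -> affine_on fold_map C.
Proof.
move=> /mapP [[[s1 s2] s3] _ ->].
(* on the cell of sign pattern s each ReLU is either its argument or 0 *)
pose c (s : bool) : R := if s then 1 else 0.
have [A [b Ab]] := pt_affine
  (2 - 4 * c s1 + 2 * c s3) (2 * c s2 - 2 * c s3) (2 * c s1 - c s2 - c s3)
  (- 2 * c s1 + 4 * c s3) (2 - 2 * c s2 - 4 * c s3) (c s1 + c s2 - 2 * c s3).
exists A, b => x x_in; rewrite Ab /fold_map.
have := x_in _ (mem_head _ _).
have := x_in (orient s2 (0, 1, 2^-1)); rewrite !inE eqxx orbT => /(_ isT).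
have := x_in (orient s3 (1, -1, 2^-1)); rewrite !inE eqxx !orbT => /(_ isT).
clear Ab x_in; rewrite /c.
by case: s1; case: s2; case: s3 => /= ? ? ?; solve_relus; congr pt; lra.
Qed.

Lemma CPwL_fold_map : CPwL fold_map.
Proof.
split.
  rewrite (_ : fold_map = net_eval fold_net); first exact: net_eval_continuous.
  by apply/funext => x; rewrite fold_netE.
move=> M; exists hinge_cells; split => [x _ _|]; first exact: hinge_cells_cover.
exact: fold_map_affine_on_cells.
Qed.

End FoldingMap.

Theorem mainTheorem4 (R : realType) :
  exists F : 'cV[R]_2 -> 'cV[R]_2,
    CPwL F /\
    (forall t : R, 0 <= t <= 1 -> F (Epar t) = Epar (rmap t)) /\
    exists N : relu_net R 2 2, forall x, F x = net_eval N x.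
Proof.
exists (@fold_map R); split; first exact: CPwL_fold_map.
split; first exact: fold_map_Epar.
by exists (fold_net R) => x; rewrite fold_netE.
Qed.
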